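(* Let $J,M$ be natural numbers. Let $\mathcal N\subset\mathbb N$ be a subset such that for each $m\in\mathbb N$ there is some $n\in\mathcal N$ divisible by $m$. Let $a_{j,i}\in\mathbb Z$ and $b_j\in\mathbb Z$ for $(j,i)\in\{1,\ldots,J\}\times\{1,\ldots,M\}$ be fixed integers. Suppose that for each $n\in\mathcal N$ there are integers $e_{i,n}$, $i\in\{1,\ldots,M\}$, such that $n$ divides $b_j-\sum_{i=1}^M a_{j,i}e_{i,n}$ for each $j\in\{1,\ldots,J\}$. Then there is some $n_0\in\mathcal N$ with the following property: for each $n\in\mathcal N$ divisible by $n_0$, there are integers $e'_{i,n}$, $i\in\{1,\ldots,M\}$, such that $\frac{n}{n_0}$ divides $e_{i,n}-e'_{i,n}$ for each $i$ and $b_j=\sum_{i=1}^M a_{j,i}e'_{i,n}$ for each $j$. *)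

From mathcomp Require Import all_boot all_order all_algebra.
Set Implicit Arguments. Unset Strict Implicit. Unset Printing Implicit Defensive.

From mathcomp Require Import all_boot all_order all_algebra.
Import GRing.Theory Num.Theory.
Local Open Scope ring_scope.

(* The Smith normal form A = L D R, with L and R unimodular, turns the system
   A e = b (mod n) into the diagonal system delta_k y_k = c_k (mod n), where
   c = L^-1 b and y = R e.  Pick n0 in Nset divisible by |delta_k| whenever
   delta_k <> 0 and by |c_k| + 1 whenever delta_k = 0.  For n in Nset divisible
   by n0, a row with delta_k = 0 says n | c_k, hence c_k = 0; a row with
   delta_k <> 0 gives delta_k (n / n0) | c_k - delta_k y_k, so y'_k = c_k / delta_k
   solves the row exactly and is congruent to y_k modulo n / n0.  Then
   e' = R^-1 y' is the required exact solution. *)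

Lemma mxOver_dvdz_mull {m n p} (B : 'M[int]_(m, n)) (t : int) (v : 'M[int]_(n, p)) :
  v \is a mxOver (dvdz t) -> B *m v \is a mxOver (dvdz t).
Proof.
move=> /mxOverP t_v; apply/mxOverP => i j; rewrite mxE rpred_sum // => k _.
exact: dvdz_mull.
Qed.

Lemma dvdz_divz_mul (d t r : int) : (d * t %| r)%Z -> (t %| r %/ d)%Z.
Proof.
have [-> | d_neq0] := eqVneq d 0; first by rewrite divz0 dvdz0.
move=> dt_r; have /dvdzP [q r_eq] : (d %| r)%Z.
  exact: dvdz_trans (dvdz_mulr t (dvdzz d)) dt_r.
by move: dt_r; rewrite r_eq mulzK // [q * d]mulrC dvdz_mul2l.
Qed.

Lemma dvdz_lt_eq0 (n : nat) (c : int) : (n%:Z %| c)%Z -> (`|c| < n)%N -> c = 0.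
Proof.
move=> n_c lt_c_n; apply/eqP; rewrite -absz_eq0 -leqn0 leqNgt; apply/negP => c_gt0.
by move: (dvdn_leq c_gt0 n_c); rewrite leqNgt lt_c_n.
Qed.

Definition lift_modulus (delta c : int) : nat :=
  if delta == 0 then `|c|.+1%N else `|delta|%N.

Lemma lift_modulus_gt0 (delta c : int) : (0 < lift_modulus delta c)%N.
Proof. by rewrite /lift_modulus; case: eqVneq => //; rewrite absz_gt0. Qed.

Lemma dvdz_lift_residual (delta c x : int) (n0 n : nat) :
  (0 < n)%N -> (lift_modulus delta c %| n0)%N -> (n0 %| n)%N ->
  (n%:Z %| c - delta * x)%Z -> (delta * (n %/ n0)%N%:Z %| c - delta * x)%Z.
Proof.
rewrite /lift_modulus => n_gt0; have [-> | _] := eqVneq delta 0.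
  rewrite !mul0r subr0 dvd0z => c_n0 n0_n n_c.
  have n0_gt0 := dvdn_gt0 n_gt0 n0_n.
  apply/eqP/(@dvdz_lt_eq0 n) => //.
  exact: leq_trans (dvdn_leq n0_gt0 c_n0) (dvdn_leq n_gt0 n0_n).
move=> delta_n0 /divnK n_eq; apply: dvdz_trans.
by rewrite -[in X in (_ %| X)%Z]n_eq PoszM mulrC dvdz_mul.
Qed.

Section SmithDiagonal.
Variables (J M : nat) (d : seq int).

Definition Smith_diag : 'M[int]_(J, M) := \matrix_(i, j) (d`_i *+ (i == j :> nat)).

(* Entries of d past M are junk: the k-th row of Smith_diag vanishes for k >= M. *)
Definition Smith_coef (k : 'I_J) : int := if (k < M)%N then d`_k else 0.

Let Delta := diag_mx (\row_k Smith_coef k).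

Lemma Smith_diagE : Smith_diag = Delta *m pid_mx J.
Proof.
apply/matrixP => i j; rewrite mul_diag_mx !mxE /Smith_coef ltn_ord andbT.
by case: eqP => [-> | _]; rewrite ?ltn_ord ?mulr1 ?mulr0.
Qed.

Lemma Smith_diag_pid : Smith_diag *m pid_mx J = Delta.
Proof.
rewrite Smith_diagE -mulmxA mul_pid_mx minnn.
apply/matrixP => i j; rewrite mul_diag_mx !mxE /Smith_coef leq_min ltn_ord andbT.
by case: ltnP => _; rewrite ?andbT ?andbF ?mul0r ?mul0rn // mulr_natr.
Qed.

Lemma Smith_residualE (c : 'cV_J) (g : 'cV_M) (k : 'I_J) :
  (c - Smith_diag *m g) k ord0 = c k ord0 - Smith_coef k * (pid_mx J *m g) k ord0.
Proof.
rewrite mxE [X in _ + X]mxE Smith_diagE -mulmxA mul_diag_mx.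
by rewrite [X in _ - X]mxE [X in X * _]mxE.
Qed.

Lemma Smith_diag_solve (c : 'cV_J) (f : 'cV_M) (t : int) :
    (forall k, (Smith_coef k * t %| (c - Smith_diag *m f) k ord0)%Z) ->
  exists2 f' : 'cV_M, Smith_diag *m f' = c & f - f' \is a mxOver (dvdz t).
Proof.
(* Correct the k-th coordinate of f by r_k / delta_k; since x %/ 0 = 0, the
   coordinates with delta_k = 0 are left untouched. *)
set r := c - _ => coef_t_r.
pose u : 'cV_J := \col_k (r k ord0 %/ Smith_coef k)%Z.
have coef_r k : (Smith_coef k %| r k ord0)%Z.
  exact: dvdz_trans (dvdz_mulr t (dvdzz _)) (coef_t_r k).
have Delta_u : Delta *m u = r.
  apply/matrixP => k j; rewrite ord1 mul_diag_mx mxE [u k _]mxE [X in X * _]mxE.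
  by rewrite mulrC divzK ?coef_r.
exists (f + pid_mx J *m u).
  by rewrite mulmxDr mulmxA Smith_diag_pid Delta_u /r addrC subrK.
rewrite opprD addrA subrr add0r rpredN; apply: mxOver_dvdz_mull.
by apply/mxOverP => k j; rewrite mxE; apply: dvdz_divz_mul.
Qed.

End SmithDiagonal.

Lemma intmx_congruence_lift {J M} (A : 'M[int]_(J, M)) (b : 'cV[int]_J) :
  exists2 N : nat, (0 < N)%N &
    forall (n0 n : nat) (e : 'cV[int]_M),
      (0 < n)%N -> (N %| n0)%N -> (n0 %| n)%N -> b - A *m e \is a mxOver (dvdz n) ->
    exists2 e' : 'cV_M, A *m e' = b & e - e' \is a mxOver (dvdz (n %/ n0)%N).
Proof.
have [L L_unit [R R_unit [d _ defA]]] := int_Smith_normal_form A.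
pose c := invmx L *m b.
exists (\prod_k lift_modulus (Smith_coef J M d k) (c k ord0))%N.
  by apply: prodn_gt0 => k; apply: lift_modulus_gt0.
move=> n0 n e n_gt0 N_n0 n0_n /(mxOver_dvdz_mull (invmx L)).
have -> : invmx L *m (b - A *m e) = c - Smith_diag J M d *m (R *m e).
  by rewrite mulmxBr defA -!mulmxA mulKmx.
move=> /mxOverP c_res.
have [f' Df' f_f'] : exists2 f' : 'cV_M,
    Smith_diag J M d *m f' = c & R *m e - f' \is a mxOver (dvdz (n %/ n0)%N).
  apply: Smith_diag_solve => k; rewrite Smith_residualE.
  apply: dvdz_lift_residual n_gt0 _ n0_n _; last by rewrite -Smith_residualE.
  by apply: dvdn_trans N_n0; rewrite (bigD1 k) //= dvdn_mulr.
exists (invmx R *m f'); first by rewrite defA -!mulmxA mulKVmx // Df' mulKVmx.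
by rewrite -[e in e - _](mulKmx R_unit) -mulmxBr mxOver_dvdz_mull.
Qed.

Theorem lemma10 (J M : nat) (Nset : pred nat)
  (a : 'I_J -> 'I_M -> int) (b : 'I_J -> int) (e : nat -> 'I_M -> int)
  (hNpos : forall n, Nset n -> (0 < n)%N)
  (hNcof : forall m : nat, (0 < m)%N -> exists2 n, Nset n & (m %| n)%N)
  (he : forall n, Nset n -> forall j : 'I_J,
          (n%:Z %| b j - \sum_(i < M) a j i * e n i)%Z) :
  exists2 n0, Nset n0 &
    forall n, Nset n -> (n0 %| n)%N ->
      exists e' : 'I_M -> int,
        (forall i : 'I_M, ((n %/ n0)%N%:Z %| e n i - e' i)%Z) /\
        (forall j : 'I_J, b j = \sum_(i < M) a j i * e' i).
Proof.
pose A : 'M[int]_(J, M) := \matrix_(j, i) a j i.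
have [N N_gt0 lift_N] := intmx_congruence_lift A (\col_j b j).
have [n0 Nn0 N_n0] := hNcof N N_gt0.
exists n0 => // n Nn n0_n.
have n_res : \col_j b j - A *m \col_i e n i \is a mxOver (dvdz n).
  apply/mxOverP => j k; rewrite ord1 !mxE.
  under eq_bigr do rewrite !mxE.
  exact: he.
have [e' Ae' e_e'] := lift_N n0 n _ (hNpos n Nn) N_n0 n0_n n_res.
exists (fun i => e' i ord0); split => [i | j].
  by have := mxOverP e_e' i ord0; rewrite !mxE.
have /matrixP/(_ j ord0) := Ae'; rewrite !mxE => <-.
by apply: eq_bigr => i _; rewrite mxE.
Qed.
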